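(* Let $\kappa>0$, $g>0$, $p\ge0$, $\delta^2>0$, and let $h$ be a random variable with Gamma distribution of shape $\kappa$ and scale $g/\kappa$. Let $c=\log_2(1+ph/\delta^2)$, $\bar\gamma=pg/\delta^2$ and $\beta=e^{\psi(\kappa)}/\kappa$, where $\psi$ is the digamma function. Then $$\mathbb{E}\{c\}\ \ge\ \bar c\triangleq\log_2(1+\beta\bar\gamma).$$ Moreover, the bound is asymptotically tight: $\mathbb{E}\{c\}-\bar c\to0$ as $\bar\gamma\to\infty$ or as $\kappa\to\infty$. *)

From Stdlib Require Import Reals.
From Coquelicot Require Import Coquelicot.
Open Scope R_scope.

Definition Gamma_fun (k : R) : R :=
  RInt_gen (fun t => Rpower t (k - 1) * exp (- t))
           (at_right 0) (Rbar_locally p_infty).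

Definition digamma (k : R) : R := Derive Gamma_fun k / Gamma_fun k.

Definition gamma_pdf (k th x : R) : R :=
  Rpower x (k - 1) * exp (- x / th) / (Gamma_fun k * Rpower th k).

Definition gamma_expect (k th : R) (f : R -> R) : R :=
  RInt_gen (fun x => f x * gamma_pdf k th x)
           (at_right 0) (Rbar_locally p_infty).

Definition log2 (x : R) : R := ln x / ln 2.

Definition capacity (p d2 h : R) : R := log2 (1 + p * h / d2).

Definition Ec (kappa g p d2 : R) : R :=
  gamma_expect kappa (g / kappa) (capacity p d2).

Definition gbar (g p d2 : R) : R := p * g / d2.

Definition beta (kappa : R) : R := exp (digamma kappa) / kappa.

Definition cbar (kappa g p d2 : R) : R := log2 (1 + beta kappa * gbar g p d2).

(* Write h = th Y with th = g / kappa, so that Y ~ Gamma(kappa, 1), and put c = gbar / kappa.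
   Then E{c} ln 2 = E ln (1 + c Y) and beta gbar = c e^(E ln Y), because differentiating
   Gamma(s) = int t^(s-1) e^-t dt under the integral sign gives psi(kappa) = E ln Y.
   The lower bound is Jensen's inequality for the convex function u |-> ln (1 + c e^u) at
   u = ln Y.  For the gap, concavity of y |-> ln (1 + c y) and E Y = kappa bound it by
   ln kappa - psi(kappa), which for kappa > 1 is at most 1/(kappa - 1) as E (1/Y) = 1/(kappa - 1);
   and ln (1 + c y) <= ln c + ln y + (1 + 1/s) (c y)^-s bounds it by O(c^-s) for any
   0 < s <= 1 with s < kappa, which vanishes as gbar -> oo. *)

From Stdlib Require Import Reals Lra Classical.
From Coquelicot Require Import Coquelicot.
Open Scope R_scope.

(** * Improper integrals over (0, +oo) *)

Definition is_RInt_0_infty (f : R -> R) (l : R) : Prop :=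
  is_RInt_gen f (at_right 0) (Rbar_locally p_infty) l.

Definition continuous_on_pos (f : R -> R) : Prop :=
  forall x, 0 < x -> continuous f x.

Definition nonneg_on_pos (f : R -> R) : Prop :=
  forall x, 0 < x -> 0 <= f x.

Lemma ball_R (x y : R) (e : posreal) : ball x e y <-> Rabs (y - x) < e.
Proof. unfold ball; simpl; unfold AbsRing_ball, abs, minus, plus, opp; simpl; tauto. Qed.

Lemma at_right_0_iff (P : R -> Prop) :
  at_right 0 P <-> exists d, 0 < d /\ forall y, 0 < y < d -> P y.
Proof.
assert (ball0 : forall (d : posreal) y, 0 < y -> ball 0 d y <-> y < d).
{ intros d y Hy; rewrite ball_R, Rminus_0_r, Rabs_pos_eq; lra. }
split.
- intros [d Hd]; exists d; split; [apply cond_pos|].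
  intros y Hy; apply Hd; [apply ball0|]; lra.
- intros [d [Hd HP]]; exists (mkposreal d Hd); intros y Hy Hy0.
  apply HP; split; [lra|]; apply (ball0 (mkposreal d Hd)); assumption.
Qed.

Lemma filter_prod_0_infty (P : R -> R -> Prop) (d M : R) : 0 < d ->
  (forall a b, 0 < a < d -> M < b -> P a b) ->
  filter_prod (at_right 0) (Rbar_locally p_infty) (fun ab => P (fst ab) (snd ab)).
Proof.
intros Hd HP; apply Filter_prod with (fun a => 0 < a < d) (fun b => M < b).
- apply at_right_0_iff; exists d; auto.
- exists M; auto.
- exact HP.
Qed.

Lemma Rmin_pos_le (a b x : R) : 0 < a -> 0 < b -> Rmin a b <= x -> 0 < x.
Proof. intros Ha Hb; pose proof (Rmin_pos a b Ha Hb); lra. Qed.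

Lemma ex_RInt_continuous_on_pos (f : R -> R) (a b : R) :
  continuous_on_pos f -> 0 < a -> 0 < b -> ex_RInt f a b.
Proof.
intros Hf Ha Hb; apply (ex_RInt_continuous (V := R_CompleteNormedModule)).
intros z [Hz _]; exact (Hf z (Rmin_pos_le a b z Ha Hb Hz)).
Qed.

Section Nonnegative.

Variable f : R -> R.
Hypothesis f_cont : continuous_on_pos f.
Hypothesis f_ge0 : nonneg_on_pos f.

Lemma RInt_le_RInt_superinterval (a b a' b' : R) :
  0 < a' <= a -> a <= b <= b' -> RInt f a b <= RInt f a' b'.
Proof.
intros Ha Hb.
assert (ex : forall u v, a' <= u -> a' <= v -> ex_RInt f u v).
{ intros u v Hu Hv; apply ex_RInt_continuous_on_pos; auto; lra. }
assert (ge0 : forall u v, a' <= u <= v -> 0 <= RInt f u v).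
{ intros u v Huv; apply RInt_ge_0; try apply ex; try lra.
  intros x Hx; apply f_ge0; lra. }
rewrite <- (RInt_Chasles f a' a b') by (apply ex; lra).
rewrite <- (RInt_Chasles f a b b') by (apply ex; lra).
pose proof (ge0 a' a); pose proof (ge0 b b'); unfold plus; simpl; lra.
Qed.

Lemma RInt_le_is_RInt_0_infty (l : R) : is_RInt_0_infty f l ->
  forall a b, 0 < a <= b -> RInt f a b <= l.
Proof.
intros Hl a b Hab; apply Rnot_lt_le; intro Hlt.
assert (He : 0 < RInt f a b - l) by lra.
destruct (Hl (ball l (mkposreal _ He)) (locally_ball _ _)) as [Q Q' HQ HQ' HQQ'].
apply at_right_0_iff in HQ; destruct HQ as [d [Hd HQ]]; destruct HQ' as [M HM].
set (a' := Rmin (a / 2) (d / 2)); set (b' := Rmax (b + 1) (M + 1)).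
assert (Ha' : 0 < a' <= a /\ a' < d).
{ unfold a'; pose proof (Rmin_pos (a / 2) (d / 2)); pose proof (Rmin_l (a / 2) (d / 2));
  pose proof (Rmin_r (a / 2) (d / 2)); lra. }
assert (Hb' : b <= b' /\ M < b').
{ unfold b'; pose proof (Rmax_l (b + 1) (M + 1)); pose proof (Rmax_r (b + 1) (M + 1)); lra. }
destruct (HQQ' a' b' (HQ a' ltac:(lra)) (HM b' (proj2 Hb'))) as [y [Hy Hball]].
apply (is_RInt_unique (V := R_CompleteNormedModule)) in Hy; simpl in Hy; subst y.
pose proof (RInt_le_RInt_superinterval a b a' b' ltac:(lra) ltac:(lra)).
rewrite ball_R in Hball; apply Rabs_def2 in Hball; simpl in Hball; lra.
Qed.

Lemma ex_is_RInt_0_infty_bounded (B : R) :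
  (forall a b, 0 < a <= b -> RInt f a b <= B) -> exists l, is_RInt_0_infty f l.
Proof.
intros HB.
set (E := fun y => exists a b, 0 < a <= b /\ y = RInt f a b).
assert (HE : bound E) by (exists B; intros y [a [b [Hab ->]]]; auto).
assert (HE0 : exists y, E y) by (exists (RInt f 1 1), 1, 1; split; [lra | reflexivity]).
destruct (completeness E HE HE0) as [l [Hub Hlub]].
exists l; intros P [eps HP].
assert (Hnear : exists a b, 0 < a <= b /\ l - eps < RInt f a b).
{ apply not_all_not_ex; intro Hn.
  enough (l <= l - eps) by (pose proof (cond_pos eps); lra).
  apply Hlub; intros y [a [b [Hab ->]]]; apply Rnot_lt_le; intro Hy.
  exact (Hn a (ex_intro _ b (conj Hab Hy))). }
destruct Hnear as [a0 [b0 [Hab0 Hnear]]].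
apply (filter_prod_0_infty (fun a b => exists y, is_RInt f a b y /\ P y) a0 b0); [lra|].
intros a b Ha Hb; exists (RInt f a b); split.
- apply (RInt_correct (V := R_CompleteNormedModule)), ex_RInt_continuous_on_pos; auto; lra.
- apply HP, ball_R.
  assert (Hle : RInt f a b <= l) by (apply Hub; exists a, b; split; [lra | reflexivity]).
  pose proof (RInt_le_RInt_superinterval a0 b0 a b ltac:(lra) ltac:(lra)).
  apply Rabs_def1; lra.
Qed.

End Nonnegative.

Lemma is_RInt_0_infty_unique (f : R -> R) (l : R) :
  is_RInt_0_infty f l -> RInt_gen f (at_right 0) (Rbar_locally p_infty) = l.
Proof.
exact (@is_RInt_gen_unique R_CompleteNormedModule _ _
  (Proper_StrongProper _ (at_right_proper_filter 0))
  (Proper_StrongProper _ (Rbar_locally_filter p_infty)) f l).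
Qed.

Lemma is_RInt_0_infty_RInt_gen (f : R -> R) (l : R) :
  is_RInt_0_infty f l -> is_RInt_0_infty f (RInt_gen f (at_right 0) (Rbar_locally p_infty)).
Proof. intros Hl; rewrite (is_RInt_0_infty_unique f l Hl); exact Hl. Qed.

Lemma is_RInt_0_infty_ext (f g : R -> R) (l : R) :
  (forall x, 0 < x -> f x = g x) -> is_RInt_0_infty f l -> is_RInt_0_infty g l.
Proof.
intros Hfg; apply (@is_RInt_gen_ext R_NormedModule (at_right 0) (Rbar_locally p_infty)
  _ _ f g l).
apply (filter_prod_0_infty (fun a b => forall x, Rmin a b < x < Rmax a b -> f x = g x) 1 1);
  [lra|].
intros a b Ha Hb x [Hx _]; apply Hfg, (Rmin_pos_le a b); lra.
Qed.

Lemma is_RInt_0_infty_plus (f g : R -> R) (lf lg : R) :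
  is_RInt_0_infty f lf -> is_RInt_0_infty g lg ->
  is_RInt_0_infty (fun x => f x + g x) (lf + lg).
Proof. exact (is_RInt_gen_plus (V := R_NormedModule) f g lf lg). Qed.

Lemma is_RInt_0_infty_minus (f g : R -> R) (lf lg : R) :
  is_RInt_0_infty f lf -> is_RInt_0_infty g lg ->
  is_RInt_0_infty (fun x => f x - g x) (lf - lg).
Proof. exact (is_RInt_gen_minus (V := R_NormedModule) f g lf lg). Qed.

Lemma is_RInt_0_infty_scal (c : R) (f : R -> R) (l : R) :
  is_RInt_0_infty f l -> is_RInt_0_infty (fun x => c * f x) (c * l).
Proof. exact (is_RInt_gen_scal (V := R_NormedModule) f c l). Qed.

Lemma is_RInt_0_infty_ge0 (f : R -> R) (l : R) :
  is_RInt_0_infty f l -> nonneg_on_pos f -> 0 <= l.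
Proof.
intros Hl Hf.
assert (Habs : Rabs l <= l).
{ apply (@RInt_gen_norm R_CompleteNormedModule _ _ (at_right_proper_filter 0)
    (Rbar_locally_filter p_infty) f f l l); try exact Hl.
  - apply (filter_prod_0_infty (fun a b => a <= b) 1 1); intros; lra.
  - apply (filter_prod_0_infty (fun a b => forall x, a <= x <= b -> norm (f x) <= f x) 1 1);
      [lra|].
    intros a b Ha Hb x Hx; unfold norm; simpl; unfold abs; simpl.
    rewrite Rabs_pos_eq; [lra|]; apply Hf; lra. }
pose proof (Rabs_pos l); lra.
Qed.

Lemma is_RInt_0_infty_le (f g : R -> R) (lf lg : R) :
  is_RInt_0_infty f lf -> is_RInt_0_infty g lg ->
  (forall x, 0 < x -> f x <= g x) -> lf <= lg.
Proof.
intros Hf Hg Hfg.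
enough (0 <= lg - lf) by lra.
apply (is_RInt_0_infty_ge0 (fun x => g x - f x)); [now apply is_RInt_0_infty_minus|].
intros x Hx; specialize (Hfg x Hx); lra.
Qed.

Lemma ex_is_RInt_0_infty_dominated (f g : R -> R) (lg : R) :
  continuous_on_pos f -> continuous_on_pos g ->
  (forall x, 0 < x -> Rabs (f x) <= g x) -> is_RInt_0_infty g lg ->
  exists l, is_RInt_0_infty f l.
Proof.
intros Hf Hg Hfg Hlg.
assert (Hbetween : forall x, 0 < x -> - g x <= f x <= g x).
{ intros x Hx; specialize (Hfg x Hx); unfold Rabs in Hfg; destruct Rcase_abs; lra. }
assert (Hg0 : nonneg_on_pos g) by (intros x Hx; specialize (Hbetween x Hx); lra).
assert (Hfg_cont : continuous_on_pos (fun x => f x + g x)).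
{ intros x Hx; apply (continuous_plus (V := R_NormedModule)); auto. }
destruct (ex_is_RInt_0_infty_bounded (fun x => f x + g x) Hfg_cont
  ltac:(intros x Hx; specialize (Hbetween x Hx); lra) (2 * lg)) as [l Hl].
- intros a b Hab.
  rewrite (RInt_plus (V := R_CompleteNormedModule)) by (apply ex_RInt_continuous_on_pos; auto; lra).
  assert (RInt f a b <= RInt g a b).
  { apply RInt_le; try lra; try (apply ex_RInt_continuous_on_pos; auto; lra).
    intros x Hx; specialize (Hbetween x ltac:(lra)); lra. }
  pose proof (RInt_le_is_RInt_0_infty g Hg Hg0 lg Hlg a b Hab); unfold plus; simpl; lra.
- exists (l - lg); apply (is_RInt_0_infty_ext (fun x => (f x + g x) - g x)); [intros; ring|].
  now apply is_RInt_0_infty_minus.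
Qed.

Lemma is_RInt_0_infty_comp_scal (f : R -> R) (c l : R) : 0 < c ->
  is_RInt_0_infty (fun y => c * f (c * y)) l -> is_RInt_0_infty f l.
Proof.
intros Hc Hl P HP; destruct (Hl P HP) as [Q Q' HQ HQ' HQQ'].
apply Filter_prod with (fun a => Q (a / c)) (fun b => Q' (b / c)).
- apply at_right_0_iff in HQ; destruct HQ as [d [Hd HQ]].
  apply at_right_0_iff; exists (d * c); split; [now apply Rmult_lt_0_compat|].
  intros y Hy; apply HQ; split; [apply Rdiv_lt_0_compat; lra|].
  apply Rmult_lt_reg_r with c; [lra|]; unfold Rdiv; rewrite Rmult_assoc, Rinv_l; lra.
- destruct HQ' as [M HM]; exists (M * c); intros x Hx; apply HM.
  apply Rmult_lt_reg_r with c; [lra|]; unfold Rdiv; rewrite Rmult_assoc, Rinv_l; lra.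
- intros a b Ha Hb; destruct (HQQ' _ _ Ha Hb) as [y [Hy Py]]; exists y; split; [|exact Py].
  simpl in Hy |- *.
  apply (is_RInt_ext (V := R_NormedModule))
    with (fun x => scal (/ c) ((fun y => c * f (c * y)) (/ c * x + 0))).
  + intros x _; unfold scal; simpl; unfold mult; simpl.
    replace (c * (/ c * x + 0)) with x by (field; lra); field; lra.
  + apply (is_RInt_comp_lin (V := R_NormedModule) (fun y => c * f (c * y)) (/ c) 0 a b y).
    replace (/ c * a + 0) with (a / c) by (unfold Rdiv; ring).
    replace (/ c * b + 0) with (b / c) by (unfold Rdiv; ring); exact Hy.
Qed.

Lemma is_RInt_0_infty_derive (F f : R -> R) (la lb : R) :
  (forall x, 0 < x -> is_derive F x (f x)) -> continuous_on_pos f ->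
  (forall eps, 0 < eps -> exists d, 0 < d /\ forall x, 0 < x < d -> Rabs (F x - la) < eps) ->
  (forall eps, 0 < eps -> exists M, forall x, M < x -> Rabs (F x - lb) < eps) ->
  is_RInt_0_infty f (lb - la).
Proof.
intros HF Hf Hla Hlb P [eps HP].
assert (He2 : 0 < eps / 2) by (pose proof (cond_pos eps); lra).
destruct (Hla _ He2) as [d [Hd Hd']]; destruct (Hlb _ He2) as [M HM].
apply (filter_prod_0_infty (fun a b => exists y, is_RInt f a b y /\ P y) d (Rmax M 0)); [lra|].
intros a b Ha Hb.
assert (Hb' : 0 < b /\ M < b) by (pose proof (Rmax_l M 0); pose proof (Rmax_r M 0); lra).
exists (F b - F a); split.
- apply (is_RInt_derive (V := R_CompleteNormedModule) F f a b);
    intros x [Hx _]; [apply HF | apply Hf]; apply (Rmin_pos_le a b); lra.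
- apply HP, ball_R.
  specialize (Hd' a Ha); specialize (HM b (proj2 Hb')).
  apply Rabs_def2 in Hd'; apply Rabs_def2 in HM; apply Rabs_def1; lra.
Qed.

Lemma ln_le_sub_1 (x : R) : 0 < x -> ln x <= x - 1.
Proof. intros Hx; pose proof (exp_ineq1_le (ln x)); rewrite exp_ln in H; lra. Qed.

Lemma ln_sub_ln_le (a b : R) : 0 < a -> 0 < b -> ln a - ln b <= a / b - 1.
Proof.
intros Ha Hb; pose proof (ln_le_sub_1 (a / b) (Rdiv_lt_0_compat a b Ha Hb)).
unfold Rdiv in *; rewrite ln_mult, ln_Rinv in H; auto; apply Rinv_0_lt_compat; auto.
Qed.

Lemma exp_le_exp_of_le (x y : R) : x <= y -> exp x <= exp y.
Proof.
intros H; destruct (Rle_lt_or_eq_dec _ _ H) as [Hlt | ->]; [left; apply exp_increasing|]; lra.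
Qed.

Lemma exp_pred_mul_ln (s t : R) : 0 < t -> exp ((s - 1) * ln t) = exp (s * ln t) / t.
Proof.
intros Ht; replace ((s - 1) * ln t) with (s * ln t + - ln t) by ring.
rewrite exp_plus, exp_Ropp, exp_ln; auto.
Qed.

Lemma Rpower_pos (t a : R) : 0 < Rpower t a.
Proof. apply exp_pos. Qed.

Lemma continuous_on_pos_Rpower (a : R) : continuous_on_pos (fun t => Rpower t a).
Proof.
intros x Hx; apply (ex_derive_continuous (V := R_NormedModule)); unfold Rpower; auto_derive; lra.
Qed.

Lemma Rpower_lt_of_lt_root (s eps t : R) : 0 < s -> 0 < eps ->
  0 < t < Rpower eps (/ s) -> Rpower t s < eps.
Proof.
intros Hs He Ht.
replace eps with (Rpower (Rpower eps (/ s)) s)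
  by (rewrite Rpower_mult, Rinv_l, Rpower_1; lra).
apply Rlt_Rpower_l; lra.
Qed.

Lemma Rpower_neg_lt_of_gt_root (s eps t : R) : 0 < s -> 0 < eps ->
  Rpower eps (- / s) < t -> Rpower t (- s) < eps.
Proof.
intros Hs He Ht; pose proof (Rpower_pos eps (- / s)).
assert (Hln : - / s * ln eps < ln t)
  by (rewrite <- (ln_exp (- / s * ln eps)); apply ln_increasing; auto).
rewrite <- (exp_ln eps) by exact He; apply exp_increasing.
apply Rmult_lt_compat_l with (r := s) in Hln; [|exact Hs].
replace (s * (- / s * ln eps)) with (- ln eps) in Hln by (field; lra); lra.
Qed.

(** * The Gamma function and its logarithmic moment *)

Definition gamma_kernel (s t : R) : R := Rpower t (s - 1) * exp (- t).

Lemma gamma_kernel_continuous (s : R) : continuous_on_pos (gamma_kernel s).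
Proof.
intros x Hx; apply (ex_derive_continuous (V := R_NormedModule)).
unfold gamma_kernel, Rpower; auto_derive; lra.
Qed.

Lemma gamma_kernel_pos (s t : R) : 0 < gamma_kernel s t.
Proof. apply Rmult_lt_0_compat; [apply Rpower_pos | apply exp_pos]. Qed.

Lemma gamma_kernel_ge0 (s : R) : nonneg_on_pos (gamma_kernel s).
Proof. intros t _; left; apply gamma_kernel_pos. Qed.

Lemma gamma_kernel_exp (s t : R) : gamma_kernel s t = exp ((s - 1) * ln t - t).
Proof. unfold gamma_kernel, Rpower; unfold Rminus at 2; rewrite exp_plus; reflexivity. Qed.

Lemma gamma_kernel_shift (s a t : R) :
  gamma_kernel (s + a) t = Rpower t a * gamma_kernel s t.
Proof. rewrite !gamma_kernel_exp; unfold Rpower; rewrite <- exp_plus; f_equal; ring. Qed.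

Lemma gamma_kernel_succ (s t : R) : 0 < t -> gamma_kernel (s + 1) t = t * gamma_kernel s t.
Proof. intros Ht; rewrite gamma_kernel_shift, Rpower_1; auto. Qed.

Lemma gamma_kernel_le_Rpower (s t : R) : 0 < t -> gamma_kernel s t <= Rpower t (s - 1).
Proof. intros Ht; rewrite gamma_kernel_exp; apply exp_le_exp_of_le; lra. Qed.

(* [(s+1)^(s+1) e^-(s+1)] is the maximum of [t^(s+1) e^-t]. *)
Lemma gamma_kernel_le_inv_sqr (s t : R) : 0 < s -> 0 < t ->
  gamma_kernel s t <= Rpower (s + 1) (s + 1) * exp (- (s + 1)) / (t * t).
Proof.
intros Hs Ht.
apply Rmult_le_reg_r with (t * t); [nra|].
unfold Rdiv; rewrite Rmult_assoc, Rinv_l, Rmult_1_r by nra.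
replace (t * t) with (exp (2 * ln t))
  by (replace (2 * ln t) with (ln t + ln t) by ring; rewrite exp_plus, exp_ln; auto).
rewrite gamma_kernel_exp; unfold Rpower; rewrite <- !exp_plus; apply exp_le_exp_of_le.
pose proof (ln_sub_ln_le t (s + 1) Ht ltac:(lra)) as Hln.
assert (H : (s + 1) * (ln t - ln (s + 1)) <= (s + 1) * (t / (s + 1) - 1))
  by (apply Rmult_le_compat_l; lra).
replace ((s + 1) * (t / (s + 1) - 1)) with (t - (s + 1)) in H by (field; lra).
lra.
Qed.

Lemma RInt_Rpower_le (s a : R) : 0 < s -> 0 < a <= 1 ->
  RInt (fun t => Rpower t (s - 1)) a 1 <= / s.
Proof.
intros Hs Ha.
rewrite (is_RInt_unique (V := R_CompleteNormedModule) _ _ _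
  (Rpower 1 s / s - Rpower a s / s)).
- replace (Rpower 1 s) with 1 by (unfold Rpower; rewrite ln_1, Rmult_0_r, exp_0; reflexivity).
  pose proof (Rpower_pos a s); pose proof (Rinv_0_lt_compat s Hs); unfold Rdiv; nra.
- apply (is_RInt_derive (V := R_CompleteNormedModule) (fun t => Rpower t s / s));
    intros x [Hx _]; pose proof (Rmin_pos_le a 1 x ltac:(lra) ltac:(lra) Hx).
  + unfold Rpower; auto_derive; [lra|].
    rewrite exp_pred_mul_ln by lra; field; lra.
  + now apply continuous_on_pos_Rpower.
Qed.

Lemma RInt_inv_sqr_le (K b : R) : 0 <= K -> 1 <= b -> RInt (fun t => K / (t * t)) 1 b <= K.
Proof.
intros HK Hb.
rewrite (is_RInt_unique (V := R_CompleteNormedModule) _ _ _ (- K / b - - K / 1)).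
- assert (0 <= K / b) by (apply Rdiv_le_0_compat; lra).
  unfold Rdiv at 1 2; rewrite Ropp_mult_distr_l_reverse in *; lra.
- apply (is_RInt_derive (V := R_CompleteNormedModule) (fun t => - K / t));
    intros x [Hx _]; pose proof (Rmin_pos_le 1 b x ltac:(lra) ltac:(lra) Hx).
  + auto_derive; [lra|]; field; lra.
  + apply (ex_derive_continuous (V := R_NormedModule)); auto_derive; nra.
Qed.

Lemma is_RInt_0_infty_Gamma (s : R) : 0 < s -> is_RInt_0_infty (gamma_kernel s) (Gamma_fun s).
Proof.
intros Hs; set (K := Rpower (s + 1) (s + 1) * exp (- (s + 1))).
assert (HK : 0 <= K) by (left; apply Rmult_lt_0_compat; [apply Rpower_pos | apply exp_pos]).
assert (Hcont := gamma_kernel_continuous s).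
destruct (ex_is_RInt_0_infty_bounded (gamma_kernel s) Hcont (gamma_kernel_ge0 s) (/ s + K))
  as [l Hl].
- intros a b Hab; set (a' := Rmin a 1); set (b' := Rmax b 1).
  assert (Ha' : 0 < a' <= 1 /\ a' <= a)
    by (unfold a'; pose proof (Rmin_pos a 1); pose proof (Rmin_l a 1);
        pose proof (Rmin_r a 1); lra).
  assert (Hb' : 1 <= b' /\ b <= b')
    by (unfold b'; pose proof (Rmax_l b 1); pose proof (Rmax_r b 1); lra).
  apply Rle_trans with (RInt (gamma_kernel s) a' b');
    [apply RInt_le_RInt_superinterval; auto using gamma_kernel_ge0; lra|].
  rewrite <- (RInt_Chasles (V := R_CompleteNormedModule) _ a' 1 b')
    by (apply ex_RInt_continuous_on_pos; auto; lra).
  assert (RInt (gamma_kernel s) a' 1 <= RInt (fun t => Rpower t (s - 1)) a' 1).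
  { apply RInt_le; try lra; try (apply ex_RInt_continuous_on_pos;
      auto using continuous_on_pos_Rpower; lra).
    intros; apply gamma_kernel_le_Rpower; lra. }
  assert (RInt (gamma_kernel s) 1 b' <= RInt (fun t => K / (t * t)) 1 b').
  { apply RInt_le; try lra; try (apply ex_RInt_continuous_on_pos; auto; lra).
    - apply ex_RInt_continuous_on_pos; try lra.
      intros x Hx; apply (ex_derive_continuous (V := R_NormedModule)); auto_derive; nra.
    - intros; apply gamma_kernel_le_inv_sqr; lra. }
  pose proof (RInt_Rpower_le s a' Hs (proj1 Ha')); pose proof (RInt_inv_sqr_le K b' HK (proj1 Hb')).
  unfold plus; simpl; lra.
- exact (is_RInt_0_infty_RInt_gen _ _ Hl).
Qed.

Lemma Gamma_fun_pos (s : R) : 0 < s -> 0 < Gamma_fun s.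
Proof.
intros Hs.
pose proof (RInt_le_is_RInt_0_infty _ (gamma_kernel_continuous s) (gamma_kernel_ge0 s) _
  (is_RInt_0_infty_Gamma s Hs) 1 2 ltac:(lra)).
assert (0 < RInt (gamma_kernel s) 1 2).
{ apply RInt_gt_0; [lra | intros; apply gamma_kernel_pos |].
  intros x Hx; apply gamma_kernel_continuous; lra. }
lra.
Qed.

Lemma Rpower_mul_exp_opp_near_0 (s eps : R) : 0 < s -> 0 < eps ->
  exists d, 0 < d /\ forall t, 0 < t < d -> Rabs (Rpower t s * exp (- t) - 0) < eps.
Proof.
intros Hs He; exists (Rmin 1 (Rpower eps (/ s))).
split; [apply Rmin_pos; [lra | apply Rpower_pos]|].
intros t Ht; pose proof (Rpower_pos t s); pose proof (exp_pos (- t)).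
rewrite Rminus_0_r, Rabs_pos_eq by nra.
assert (exp (- t) <= 1) by (rewrite <- exp_0; apply exp_le_exp_of_le; lra).
pose proof (Rpower_lt_of_lt_root s eps t Hs He
  (conj (proj1 Ht) (Rlt_le_trans _ _ _ (proj2 Ht) (Rmin_r _ _)))).
nra.
Qed.

Lemma Rpower_mul_exp_opp_near_infty (s eps : R) : 0 < s -> 0 < eps ->
  exists M, forall t, M < t -> Rabs (Rpower t s * exp (- t) - 0) < eps.
Proof.
intros Hs He; set (K := Rpower (s + 2) (s + 2) * exp (- (s + 2))).
exists (Rmax 1 (K / eps)); intros t Ht.
assert (Ht' : 1 < t /\ K / eps < t)
  by (pose proof (Rmax_l 1 (K / eps)); pose proof (Rmax_r 1 (K / eps)); lra).
pose proof (gamma_kernel_le_inv_sqr (s + 1) t ltac:(lra) ltac:(lra)) as Hbound.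
replace (s + 1 + 1) with (s + 2) in Hbound by ring; fold K in Hbound.
unfold gamma_kernel in Hbound; replace (s + 1 - 1) with s in Hbound by ring.
pose proof (Rpower_pos t s); pose proof (exp_pos (- t)).
rewrite Rminus_0_r, Rabs_pos_eq by nra.
apply Rle_lt_trans with (1 := Hbound), Rmult_lt_reg_r with (t * t); [nra|].
unfold Rdiv; rewrite Rmult_assoc, Rinv_l, Rmult_1_r by nra.
assert (K < eps * t)
  by (replace K with (eps * (K / eps)) by (field; lra); apply Rmult_lt_compat_l; lra).
assert (eps * t * 1 < eps * t * t) by (apply Rmult_lt_compat_l; nra).
nra.
Qed.

Lemma Gamma_fun_succ (s : R) : 0 < s -> Gamma_fun (s + 1) = s * Gamma_fun s.
Proof.
intros Hs.
assert (Hparts : is_RInt_0_infty (fun t => s * gamma_kernel s t - gamma_kernel (s + 1) t) (0 - 0)).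
{ apply is_RInt_0_infty_derive with (fun t => Rpower t s * exp (- t)).
  - intros x Hx; unfold gamma_kernel, Rpower; auto_derive; [lra|].
    replace (s + 1 - 1) with s by ring.
    rewrite exp_pred_mul_ln by lra; field; lra.
  - intros x Hx; apply (continuous_minus (V := R_NormedModule));
      [apply (continuous_scal_r (V := R_NormedModule))|]; apply gamma_kernel_continuous; lra.
  - intros eps He; now apply Rpower_mul_exp_opp_near_0.
  - intros eps He; now apply Rpower_mul_exp_opp_near_infty. }
assert (Hlin : is_RInt_0_infty (fun t => s * gamma_kernel s t - gamma_kernel (s + 1) t)
  (s * Gamma_fun s - Gamma_fun (s + 1))).
{ apply is_RInt_0_infty_minus; [apply is_RInt_0_infty_scal|]; apply is_RInt_0_infty_Gamma; lra. }
pose proof (is_RInt_0_infty_unique _ _ Hparts); pose proof (is_RInt_0_infty_unique _ _ Hlin).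
lra.
Qed.

Definition Gamma_ln (s : R) : R :=
  RInt_gen (fun t => ln t * gamma_kernel s t) (at_right 0) (Rbar_locally p_infty).

Lemma abs_ln_le_Rpower (d t : R) : 0 < d -> 0 < t ->
  d * Rabs (ln t) <= Rpower t d + Rpower t (- d).
Proof.
intros Hd Ht; unfold Rpower.
pose proof (exp_ineq1_le (d * ln t)); pose proof (exp_ineq1_le (- d * ln t)).
pose proof (exp_pos (d * ln t)); pose proof (exp_pos (- d * ln t)).
unfold Rabs; destruct Rcase_abs; nra.
Qed.

Lemma is_RInt_0_infty_Gamma_ln (s : R) : 0 < s ->
  is_RInt_0_infty (fun t => ln t * gamma_kernel s t) (Gamma_ln s).
Proof.
intros Hs; set (d := s / 2).
destruct (ex_is_RInt_0_infty_dominated (fun t => ln t * gamma_kernel s t)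
  (fun t => / d * (gamma_kernel (s + d) t + gamma_kernel (s + - d) t))
  (/ d * (Gamma_fun (s + d) + Gamma_fun (s + - d)))) as [l Hl].
- intros x Hx; apply (ex_derive_continuous (V := R_NormedModule)).
  unfold gamma_kernel, Rpower; auto_derive; lra.
- intros x Hx; apply (continuous_scal_r (V := R_NormedModule)),
    (continuous_plus (V := R_NormedModule)); apply gamma_kernel_continuous; lra.
- intros t Ht; rewrite !gamma_kernel_shift, Rabs_mult, (Rabs_pos_eq (gamma_kernel s t))
    by apply gamma_kernel_ge0, Ht.
  pose proof (abs_ln_le_Rpower d t ltac:(unfold d; lra) Ht); pose proof (gamma_kernel_pos s t).
  apply Rmult_le_reg_l with d; [unfold d; lra|].
  rewrite <- (Rmult_assoc d (/ d)), Rinv_r, Rmult_1_l by (unfold d; lra); nra.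
- apply is_RInt_0_infty_scal, is_RInt_0_infty_plus; apply is_RInt_0_infty_Gamma; unfold d; lra.
- exact (is_RInt_0_infty_RInt_gen _ _ Hl).
Qed.

Lemma exp_sub_1_sub_le (u : R) : 0 <= exp u - 1 - u <= u * u * exp (Rabs u).
Proof.
pose proof (exp_ineq1_le u); pose proof (exp_ineq1_le (- u)); pose proof (exp_pos u).
assert (Einv : exp u * exp (- u) = 1) by (rewrite <- exp_plus, Rplus_opp_r; apply exp_0).
assert (Hsub : exp u - 1 <= u * exp u) by nra.
split; [lra|].
unfold Rabs; destruct Rcase_abs.
- assert (1 <= exp (- u)) by (rewrite <- exp_0; apply exp_le_exp_of_le; lra); nra.
- assert (u * (exp u - 1) <= u * (u * exp u)) by (apply Rmult_le_compat_l; lra); lra.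
Qed.

Lemma cube_sum_le (X Y : R) : 0 <= X -> 0 <= Y ->
  (X + Y) * (X + Y) * (X + Y) <= 4 * (X * X * X + Y * Y * Y).
Proof.
intros HX HY.
assert (0 <= (X + Y) * ((X - Y) * (X - Y))) by (apply Rmult_le_pos; [lra | apply Rle_0_sqr]).
replace (4 * (X * X * X + Y * Y * Y))
  with ((X + Y) * (X + Y) * (X + Y) + 3 * ((X + Y) * ((X - Y) * (X - Y)))) by ring.
lra.
Qed.

(* With [X = t^d] and [Y = t^-d]: [|h ln t| <= d |ln t| <= X + Y]
   and [(X + Y)^3 <= 4 (X^3 + Y^3)]. *)
Lemma Rpower_sub_1_sub_le (d h t : R) : 0 < d -> Rabs h <= d -> 0 < t ->
  0 <= Rpower t h - 1 - h * ln t <=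
  4 / (d * d) * (h * h) * (Rpower t (3 * d) + Rpower t (- (3 * d))).
Proof.
intros Hd Hh Ht; set (X := Rpower t d); set (Y := Rpower t (- d)).
destruct (exp_sub_1_sub_le (h * ln t)) as [Hlow Hup]; split; [exact Hlow|].
assert (HX : 0 < X) by apply Rpower_pos; assert (HY : 0 < Y) by apply Rpower_pos.
assert (Hcubes : Rpower t (3 * d) + Rpower t (- (3 * d)) = X * X * X + Y * Y * Y).
{ unfold X, Y; rewrite <- !Rpower_plus; f_equal; f_equal; ring. }
assert (HA : 0 <= d * Rabs (ln t) <= X + Y).
{ split; [apply Rmult_le_pos; [lra | apply Rabs_pos]|]; apply abs_ln_le_Rpower; lra. }
assert (Hexp : exp (Rabs (h * ln t)) <= X + Y).
{ apply Rle_trans with (exp (d * Rabs (ln t))).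
  - rewrite Rabs_mult; apply exp_le_exp_of_le, Rmult_le_compat_r; [apply Rabs_pos | exact Hh].
  - unfold X, Y, Rpower; unfold Rabs; destruct Rcase_abs;
      [replace (d * - ln t) with (- d * ln t) by ring|];
      pose proof (exp_pos (d * ln t)); pose proof (exp_pos (- d * ln t)); lra. }
assert (Hsq : h * ln t * (h * ln t) = h * h / (d * d) * ((d * Rabs (ln t)) * (d * Rabs (ln t)))).
{ replace (h * ln t * (h * ln t)) with (h * h * (Rabs (ln t) * Rabs (ln t)))
    by (unfold Rabs; destruct Rcase_abs; ring).
  field; lra. }
assert (Hc : 0 <= h * h / (d * d)) by (apply Rdiv_le_0_compat; nra).
apply Rle_trans with (1 := Hup); rewrite Hsq, Hcubes.
apply Rle_trans with (h * h / (d * d) * ((X + Y) * (X + Y)) * (X + Y)).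
{ apply Rmult_le_compat; [nra | left; apply exp_pos | apply Rmult_le_compat_l; nra | exact Hexp]. }
apply Rle_trans with (h * h / (d * d) * (4 * (X * X * X + Y * Y * Y))).
{ rewrite Rmult_assoc; apply Rmult_le_compat_l; [exact Hc | apply cube_sum_le; lra]. }
right; field; lra.
Qed.

Lemma Gamma_fun_taylor (s d h : R) : 0 < d -> 3 * d < s -> Rabs h <= d ->
  Rabs (Gamma_fun (s + h) - Gamma_fun s - h * Gamma_ln s) <=
  4 / (d * d) * (Gamma_fun (s + 3 * d) + Gamma_fun (s + - (3 * d))) * (h * h).
Proof.
intros Hd Hds Hh.
assert (Hh' : - d <= h <= d) by (unfold Rabs in Hh; destruct Rcase_abs in Hh; lra).
assert (Hrem : is_RInt_0_infty (fun t => (Rpower t h - 1 - h * ln t) * gamma_kernel s t)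
  (Gamma_fun (s + h) - Gamma_fun s - h * Gamma_ln s)).
{ apply (is_RInt_0_infty_ext (fun t => gamma_kernel (s + h) t - gamma_kernel s t
    - h * (ln t * gamma_kernel s t))); [intros t Ht; rewrite gamma_kernel_shift; ring|].
  apply is_RInt_0_infty_minus; [apply is_RInt_0_infty_minus|apply is_RInt_0_infty_scal];
    [apply is_RInt_0_infty_Gamma.. | apply is_RInt_0_infty_Gamma_ln]; lra. }
assert (Hbound : is_RInt_0_infty
  (fun t => 4 / (d * d) * (h * h) * (gamma_kernel (s + 3 * d) t + gamma_kernel (s + - (3 * d)) t))
  (4 / (d * d) * (h * h) * (Gamma_fun (s + 3 * d) + Gamma_fun (s + - (3 * d))))).
{ apply is_RInt_0_infty_scal, is_RInt_0_infty_plus; apply is_RInt_0_infty_Gamma; lra. }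
rewrite Rabs_pos_eq.
- replace (4 / (d * d) * (Gamma_fun (s + 3 * d) + Gamma_fun (s + - (3 * d))) * (h * h))
    with (4 / (d * d) * (h * h) * (Gamma_fun (s + 3 * d) + Gamma_fun (s + - (3 * d)))) by ring.
  apply (is_RInt_0_infty_le _ _ _ _ Hrem Hbound).
  intros t Ht; rewrite !gamma_kernel_shift, <- Rmult_plus_distr_r, <- Rmult_assoc.
  apply Rmult_le_compat_r; [apply gamma_kernel_ge0, Ht | apply Rpower_sub_1_sub_le; lra].
- apply (is_RInt_0_infty_ge0 _ _ Hrem); intros t Ht.
  apply Rmult_le_pos; [apply (Rpower_sub_1_sub_le d); lra | apply gamma_kernel_ge0, Ht].
Qed.

Lemma is_derive_of_quadratic_remainder (F : R -> R) (s l C d : R) : 0 < d ->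
  (forall h, Rabs h <= d -> Rabs (F (s + h) - F s - h * l) <= C * (h * h)) ->
  is_derive F s l.
Proof.
intros Hd Hrem; apply is_derive_Reals; intros eps He.
set (C' := Rabs C + 1).
assert (HC' : 0 < C') by (unfold C'; pose proof (Rabs_pos C); lra).
assert (Hdelta : 0 < Rmin d (eps / C')) by (apply Rmin_pos; [lra | apply Rdiv_lt_0_compat; lra]).
exists (mkposreal _ Hdelta); intros h Hh0 Hh; simpl in Hh.
assert (Hhd : Rabs h <= d) by (pose proof (Rmin_l d (eps / C')); lra).
assert (Hhe : Rabs h * C' < eps).
{ replace eps with (eps / C' * C') by (field; lra).
  apply Rmult_lt_compat_r; [lra|]; pose proof (Rmin_r d (eps / C')); lra. }
assert (Habs : 0 < Rabs h) by (apply Rabs_pos_lt; exact Hh0).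
replace ((F (s + h) - F s) / h - l) with ((F (s + h) - F s - h * l) / h) by (field; exact Hh0).
unfold Rdiv; rewrite Rabs_mult, Rabs_inv.
apply Rmult_lt_reg_r with (Rabs h); [exact Habs|].
rewrite Rmult_assoc, Rinv_l, Rmult_1_r by lra.
pose proof (Hrem h Hhd) as Hq.
replace (h * h) with (Rabs h * Rabs h) in Hq by (rewrite <- Rabs_mult; apply Rabs_pos_eq; nra).
assert (C <= C') by (unfold C'; pose proof (Rle_abs C); lra).
nra.
Qed.

Lemma is_derive_Gamma_fun (s : R) : 0 < s -> is_derive Gamma_fun s (Gamma_ln s).
Proof.
intros Hs; eapply (is_derive_of_quadratic_remainder _ _ _ _ (s / 4)); [lra|].
intros h Hh; apply (Gamma_fun_taylor s (s / 4)); lra.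
Qed.

Lemma digamma_eq (s : R) : 0 < s -> digamma s = Gamma_ln s / Gamma_fun s.
Proof.
intros Hs; unfold digamma; rewrite (is_derive_unique _ _ _ (is_derive_Gamma_fun s Hs)).
reflexivity.
Qed.

(** * Jensen bounds for the capacity *)

Definition Gamma_log1p (c k : R) : R :=
  RInt_gen (fun y => ln (1 + c * y) * gamma_kernel k y) (at_right 0) (Rbar_locally p_infty).

Lemma is_RInt_0_infty_Gamma_log1p (c k : R) : 0 <= c -> 0 < k ->
  is_RInt_0_infty (fun y => ln (1 + c * y) * gamma_kernel k y) (Gamma_log1p c k).
Proof.
intros Hc Hk.
destruct (ex_is_RInt_0_infty_dominated (fun y => ln (1 + c * y) * gamma_kernel k y)
  (fun y => c * gamma_kernel (k + 1) y) (c * Gamma_fun (k + 1))) as [l Hl].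
- intros x Hx; apply (ex_derive_continuous (V := R_NormedModule)).
  unfold gamma_kernel, Rpower; auto_derive; repeat split; nra.
- intros x Hx; apply (continuous_scal_r (V := R_NormedModule)), gamma_kernel_continuous; lra.
- intros y Hy; rewrite gamma_kernel_succ by exact Hy.
  assert (0 <= ln (1 + c * y)) by (rewrite <- ln_1; apply ln_le; nra).
  pose proof (ln_le_sub_1 (1 + c * y) ltac:(nra)); pose proof (gamma_kernel_pos k y).
  rewrite Rabs_pos_eq by (apply Rmult_le_pos; lra); nra.
- apply is_RInt_0_infty_scal, is_RInt_0_infty_Gamma; lra.
- exact (is_RInt_0_infty_RInt_gen _ _ Hl).
Qed.

(* Tangent line at [u = 0] of the convex function [u |-> ln (1 + c e^u)], taken at [u = ln r]. *)
Lemma ln_1_plus_mul_ge (c r : R) : 0 <= c -> 0 < r ->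
  ln (1 + c) + c / (1 + c) * ln r <= ln (1 + c * r).
Proof.
intros Hc Hr.
assert (Ha : 0 < 1 + c * r) by nra.
pose proof (ln_sub_ln_le (1 + c) (1 + c * r) ltac:(lra) Ha) as H1.
pose proof (ln_sub_ln_le (r * (1 + c)) (1 + c * r) ltac:(nra) Ha) as H2.
rewrite ln_mult in H2 by lra.
assert (H3 : c * (ln r + ln (1 + c) - ln (1 + c * r)) <= c * (r * (1 + c) / (1 + c * r) - 1))
  by (apply Rmult_le_compat_l; lra).
assert (E : (1 + c) / (1 + c * r) - 1 + c * (r * (1 + c) / (1 + c * r) - 1) = 0) by (field; lra).
apply Rmult_le_reg_l with (1 + c); [lra|].
replace ((1 + c) * (ln (1 + c) + c / (1 + c) * ln r)) with ((1 + c) * ln (1 + c) + c * ln r)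
  by (field; lra).
lra.
Qed.

Lemma ln_1_plus_le_Rpower (s z : R) : 0 < s <= 1 -> 0 < z ->
  ln (1 + z) <= (1 + / s) * Rpower z s.
Proof.
intros Hs Hz.
assert (Hinv : 0 < / s) by (apply Rinv_0_lt_compat; lra).
pose proof (Rpower_pos z s) as Hzs; unfold Rpower in *.
destruct (Rle_dec z 1) as [Hz1 | Hz1].
- pose proof (ln_le_sub_1 (1 + z) ltac:(lra)).
  assert (ln z <= 0) by (rewrite <- ln_1; apply ln_le; lra).
  assert (z <= exp (s * ln z)) by (rewrite <- (exp_ln z) at 1 by lra; apply exp_le_exp_of_le; nra).
  assert (0 <= / s * exp (s * ln z)) by (apply Rmult_le_pos; lra); nra.
- assert (ln (1 + z) <= ln 2 + ln z) by (rewrite <- ln_mult by lra; apply ln_le; lra).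
  assert (ln 2 <= 1) by (pose proof (ln_le_sub_1 2 ltac:(lra)); lra).
  assert (0 < ln z) by (rewrite <- ln_1; apply ln_increasing; lra).
  assert (1 <= exp (s * ln z)) by (rewrite <- exp_0; apply exp_le_exp_of_le; nra).
  assert (ln z <= / s * exp (s * ln z)).
  { pose proof (exp_ineq1_le (s * ln z)).
    apply Rmult_le_reg_l with s; [lra|]; rewrite <- Rmult_assoc, Rinv_r, Rmult_1_l by lra; lra. }
  nra.
Qed.

Lemma Gamma_log1p_ge (c k : R) : 0 <= c -> 0 < k ->
  Gamma_fun k * ln (1 + c * exp (Gamma_ln k / Gamma_fun k)) <= Gamma_log1p c k.
Proof.
intros Hc Hk; set (G := Gamma_fun k); set (m := Gamma_ln k / G); set (c' := c * exp m).
assert (HG : 0 < G) by (apply Gamma_fun_pos; lra).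
assert (Hc' : 0 <= c') by (unfold c'; pose proof (exp_pos m); nra).
set (B := c' / (1 + c')).
assert (Htangent : is_RInt_0_infty
  (fun y => (ln (1 + c') - B * m) * gamma_kernel k y + B * (ln y * gamma_kernel k y))
  ((ln (1 + c') - B * m) * G + B * Gamma_ln k)).
{ apply is_RInt_0_infty_plus; apply is_RInt_0_infty_scal;
    [apply is_RInt_0_infty_Gamma | apply is_RInt_0_infty_Gamma_ln]; lra. }
replace (G * ln (1 + c')) with ((ln (1 + c') - B * m) * G + B * Gamma_ln k)
  by (unfold m; field; lra).
apply (is_RInt_0_infty_le _ _ _ _ Htangent (is_RInt_0_infty_Gamma_log1p c k Hc Hk)).
intros y Hy; pose proof (gamma_kernel_pos k y).
pose proof (ln_1_plus_mul_ge c' (y * exp (- m)) Hc' ltac:(pose proof (exp_pos (- m)); nra)) as T.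
rewrite ln_mult, ln_exp in T by (try apply exp_pos; lra).
replace (c' * (y * exp (- m))) with (c * y) in T
  by (unfold c'; rewrite exp_Ropp; field; apply Rgt_not_eq, exp_pos).
replace ((ln (1 + c') - B * m) * gamma_kernel k y + B * (ln y * gamma_kernel k y))
  with ((ln (1 + c') + B * (ln y + - m)) * gamma_kernel k y) by ring.
fold B in T; apply Rmult_le_compat_r; lra.
Qed.

Lemma Gamma_log1p_le (c k : R) : 0 <= c -> 0 < k ->
  Gamma_log1p c k <= Gamma_fun k * ln (1 + c * k).
Proof.
intros Hc Hk; set (G := Gamma_fun k); set (b := 1 + c * k).
assert (Hb : 0 < b) by (unfold b; nra).
assert (Htangent : is_RInt_0_infty
  (fun y => (ln b - c * k / b) * gamma_kernel k y + c / b * gamma_kernel (k + 1) y)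
  ((ln b - c * k / b) * G + c / b * Gamma_fun (k + 1))).
{ apply is_RInt_0_infty_plus; apply is_RInt_0_infty_scal; apply is_RInt_0_infty_Gamma; lra. }
rewrite Gamma_fun_succ in Htangent by exact Hk.
replace (G * ln b) with ((ln b - c * k / b) * G + c / b * (k * G)) by (field; lra).
apply (is_RInt_0_infty_le _ _ _ _ (is_RInt_0_infty_Gamma_log1p c k Hc Hk) Htangent).
intros y Hy; rewrite gamma_kernel_succ by exact Hy.
pose proof (ln_sub_ln_le (1 + c * y) b ltac:(nra) Hb); pose proof (gamma_kernel_pos k y).
replace ((ln b - c * k / b) * gamma_kernel k y + c / b * (y * gamma_kernel k y))
  with ((ln b + ((1 + c * y) / b - 1)) * gamma_kernel k y) by (unfold b in Hb |- *; field; lra).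
apply Rmult_le_compat_r; lra.
Qed.

Lemma Gamma_ln_ge (k : R) : 1 < k -> Gamma_fun k * (ln k - / (k - 1)) <= Gamma_ln k.
Proof.
intros Hk; set (G' := Gamma_fun (k - 1)).
assert (HG : Gamma_fun k = (k - 1) * G').
{ unfold G'; rewrite <- Gamma_fun_succ by lra; f_equal; ring. }
assert (Htangent : is_RInt_0_infty
  (fun y => (ln k + 1) * gamma_kernel k y - k * gamma_kernel (k - 1) y)
  ((ln k + 1) * Gamma_fun k - k * G')).
{ apply is_RInt_0_infty_minus; apply is_RInt_0_infty_scal; apply is_RInt_0_infty_Gamma; lra. }
replace (Gamma_fun k * (ln k - / (k - 1))) with ((ln k + 1) * Gamma_fun k - k * G')
  by (rewrite HG; field; lra).
apply (is_RInt_0_infty_le _ _ _ _ Htangent (is_RInt_0_infty_Gamma_ln k ltac:(lra))).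
intros y Hy; pose proof (gamma_kernel_pos (k - 1) y).
replace (gamma_kernel k y) with (y * gamma_kernel (k - 1) y)
  by (rewrite <- gamma_kernel_succ by exact Hy; f_equal; ring).
assert (y * (ln k - ln y) <= y * (k / y - 1))
  by (apply Rmult_le_compat_l; [lra | apply ln_sub_ln_le; lra]).
replace (y * (k / y - 1)) with (k - y) in H0 by (field; lra).
replace ((ln k + 1) * (y * gamma_kernel (k - 1) y) - k * gamma_kernel (k - 1) y)
  with ((y * ln k + y - k) * gamma_kernel (k - 1) y) by ring.
replace (ln y * (y * gamma_kernel (k - 1) y)) with ((y * ln y) * gamma_kernel (k - 1) y) by ring.
apply Rmult_le_compat_r; lra.
Qed.

Lemma Gamma_log1p_le_ln (c k s : R) : 0 < c -> 0 < s <= 1 -> s < k ->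
  Gamma_log1p c k <=
  Gamma_fun k * ln c + Gamma_ln k + (1 + / s) * Rpower c (- s) * Gamma_fun (k + - s).
Proof.
intros Hc Hs Hsk; set (C := (1 + / s) * Rpower c (- s)).
assert (Hbound : is_RInt_0_infty
  (fun y => ln c * gamma_kernel k y + ln y * gamma_kernel k y + C * gamma_kernel (k + - s) y)
  (ln c * Gamma_fun k + Gamma_ln k + C * Gamma_fun (k + - s))).
{ apply is_RInt_0_infty_plus; [apply is_RInt_0_infty_plus|];
    [apply is_RInt_0_infty_scal, is_RInt_0_infty_Gamma | apply is_RInt_0_infty_Gamma_ln
    | apply is_RInt_0_infty_scal, is_RInt_0_infty_Gamma]; lra. }
rewrite (Rmult_comm (Gamma_fun k)).
apply (is_RInt_0_infty_le _ _ _ _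
  (is_RInt_0_infty_Gamma_log1p c k ltac:(lra) ltac:(lra)) Hbound).
intros y Hy; rewrite gamma_kernel_shift; pose proof (gamma_kernel_pos k y).
assert (Hcy : 0 < c * y) by nra.
pose proof (ln_1_plus_le_Rpower s (/ (c * y)) Hs (Rinv_0_lt_compat _ Hcy)) as Hz.
replace (Rpower (/ (c * y)) s) with (Rpower c (- s) * Rpower y (- s)) in Hz
  by (rewrite Rpower_mult_distr by lra; unfold Rpower; rewrite ln_Rinv by lra; f_equal; ring).
replace (1 + c * y) with (c * y * (1 + / (c * y))) by (field; lra).
rewrite !ln_mult by (try apply Rplus_lt_0_compat; try apply Rinv_0_lt_compat; lra).
replace (ln c * gamma_kernel k y + ln y * gamma_kernel k y
         + C * (Rpower y (- s) * gamma_kernel k y))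
  with ((ln c + ln y + (1 + / s) * (Rpower c (- s) * Rpower y (- s))) * gamma_kernel k y)
  by (unfold C; ring).
apply Rmult_le_compat_r; lra.
Qed.

(** * The capacity gap *)

Definition jensen_gap (c k : R) : R :=
  Gamma_log1p c k / Gamma_fun k - ln (1 + c * exp (Gamma_ln k / Gamma_fun k)).

Lemma jensen_gap_ge0 (c k : R) : 0 <= c -> 0 < k -> 0 <= jensen_gap c k.
Proof.
intros Hc Hk; unfold jensen_gap; pose proof (Gamma_fun_pos k Hk).
enough (ln (1 + c * exp (Gamma_ln k / Gamma_fun k)) <= Gamma_log1p c k / Gamma_fun k) by lra.
apply Rmult_le_reg_l with (Gamma_fun k); [lra|].
replace (Gamma_fun k * (Gamma_log1p c k / Gamma_fun k)) with (Gamma_log1p c k) by (field; lra).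
apply Gamma_log1p_ge; lra.
Qed.

Lemma jensen_gap_le_inv (c k : R) : 0 <= c -> 1 < k -> jensen_gap c k <= / (k - 1).
Proof.
intros Hc Hk; unfold jensen_gap; set (G := Gamma_fun k); set (m := Gamma_ln k / G).
assert (HG : 0 < G) by (apply Gamma_fun_pos; lra).
assert (Hupper : Gamma_log1p c k / G <= ln (1 + c * k)).
{ apply Rmult_le_reg_l with G; [exact HG|].
  replace (G * (Gamma_log1p c k / G)) with (Gamma_log1p c k) by (field; lra).
  apply Gamma_log1p_le; lra. }
assert (Hm : ln k - / (k - 1) <= m).
{ apply Rmult_le_reg_l with G; [exact HG|].
  replace (G * m) with (Gamma_ln k) by (unfold m; field; lra); apply Gamma_ln_ge, Hk. }
assert (Hk_le : k <= exp (/ (k - 1)) * exp m).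
{ rewrite <- exp_plus, <- (exp_ln k) at 1 by lra; apply exp_le_exp_of_le; lra. }
assert (Hexp1 : 1 <= exp (/ (k - 1)))
  by (pose proof (exp_ineq1_le (/ (k - 1))); pose proof (Rinv_0_lt_compat (k - 1)); lra).
assert (ln (1 + c * k) <= / (k - 1) + ln (1 + c * exp m)).
{ pose proof (exp_pos m); rewrite <- (ln_exp (/ (k - 1))).
  rewrite <- ln_mult by (try apply exp_pos; nra); apply ln_le; nra. }
lra.
Qed.

Lemma jensen_gap_le_Rpower (c k s : R) : 0 < c -> 0 < s <= 1 -> s < k ->
  jensen_gap c k <= (1 + / s) * Gamma_fun (k + - s) / Gamma_fun k * Rpower c (- s).
Proof.
intros Hc Hs Hsk; unfold jensen_gap; set (G := Gamma_fun k); set (m := Gamma_ln k / G).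
assert (HG : 0 < G) by (apply Gamma_fun_pos; lra).
assert (Hupper : Gamma_log1p c k / G
  <= ln c + m + (1 + / s) * Gamma_fun (k + - s) / G * Rpower c (- s)).
{ apply Rmult_le_reg_l with G; [exact HG|].
  replace (G * (Gamma_log1p c k / G)) with (Gamma_log1p c k) by (field; lra).
  replace (G * (ln c + m + (1 + / s) * Gamma_fun (k + - s) / G * Rpower c (- s)))
    with (G * ln c + Gamma_ln k + (1 + / s) * Rpower c (- s) * Gamma_fun (k + - s))
    by (unfold m; field; lra).
  apply Gamma_log1p_le_ln; lra. }
assert (ln c + m <= ln (1 + c * exp m)).
{ pose proof (exp_pos m); rewrite <- (ln_exp m) at 1; rewrite <- ln_mult by lra.
  apply ln_le; nra. }
lra.
Qed.

Lemma gamma_pdf_scale (k th y : R) : 0 < k -> 0 < th -> 0 < y ->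
  th * gamma_pdf k th (th * y) = gamma_kernel k y / Gamma_fun k.
Proof.
intros Hk Hth Hy; unfold gamma_pdf, gamma_kernel.
pose proof (Gamma_fun_pos k Hk); pose proof (Rpower_pos th (k - 1)).
rewrite <- Rpower_mult_distr by lra.
replace (Rpower th k) with (th * Rpower th (k - 1))
  by (rewrite <- (Rpower_1 th) at 1 by lra; rewrite <- Rpower_plus; f_equal; ring).
replace (- (th * y) / th) with (- y) by (field; lra).
field; lra.
Qed.

Lemma gbar_div_ge0 (k g p d2 : R) : 0 < k -> 0 < g -> 0 <= p -> 0 < d2 ->
  0 <= gbar g p d2 / k.
Proof. intros; unfold gbar; apply Rdiv_le_0_compat; [apply Rdiv_le_0_compat; nra | lra]. Qed.

Lemma Ec_sub_cbar (k g p d2 : R) : 0 < k -> 0 < g -> 0 <= p -> 0 < d2 ->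
  Ec k g p d2 - cbar k g p d2 = jensen_gap (gbar g p d2 / k) k / ln 2.
Proof.
intros Hk Hg Hp Hd; set (th := g / k); set (c := gbar g p d2 / k).
assert (Hth : 0 < th) by (unfold th; apply Rdiv_lt_0_compat; lra).
assert (Hc : 0 <= c) by (apply gbar_div_ge0; lra).
pose proof (Gamma_fun_pos k Hk); pose proof ln_lt_2.
assert (HEc : Ec k g p d2 = Gamma_log1p c k / Gamma_fun k / ln 2).
{ apply is_RInt_0_infty_unique, (is_RInt_0_infty_comp_scal _ th); [exact Hth|].
  apply (is_RInt_0_infty_ext
    (fun y => / (Gamma_fun k * ln 2) * (ln (1 + c * y) * gamma_kernel k y))).
  - intros y Hy; fold th.
    replace (th * (capacity p d2 (th * y) * gamma_pdf k th (th * y)))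
      with (capacity p d2 (th * y) * (th * gamma_pdf k th (th * y))) by ring.
    rewrite gamma_pdf_scale by lra.
    unfold capacity, log2; replace (p * (th * y) / d2) with (c * y)
      by (unfold c, th, gbar; field; lra).
    field; lra.
  - replace (Gamma_log1p c k / Gamma_fun k / ln 2) with (/ (Gamma_fun k * ln 2) * Gamma_log1p c k)
      by (field; lra).
    apply is_RInt_0_infty_scal, is_RInt_0_infty_Gamma_log1p; lra. }
rewrite HEc; unfold cbar, log2, beta, jensen_gap; rewrite digamma_eq by exact Hk.
replace (exp (Gamma_ln k / Gamma_fun k) / k * gbar g p d2)
  with (c * exp (Gamma_ln k / Gamma_fun k)) by (unfold c; field; lra).
field; lra.
Qed.

Lemma cbar_le_Ec (k g p d2 : R) : 0 < k -> 0 < g -> 0 <= p -> 0 < d2 ->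
  cbar k g p d2 <= Ec k g p d2.
Proof.
intros Hk Hg Hp Hd; pose proof (Ec_sub_cbar k g p d2 Hk Hg Hp Hd); pose proof ln_lt_2.
pose proof (jensen_gap_ge0 _ k (gbar_div_ge0 k g p d2 Hk Hg Hp Hd) Hk).
enough (0 <= jensen_gap (gbar g p d2 / k) k / ln 2) by lra.
apply Rdiv_le_0_compat; lra.
Qed.

Lemma Ec_sub_cbar_le_inv (k g p d2 : R) : 1 < k -> 0 < g -> 0 <= p -> 0 < d2 ->
  Rabs (Ec k g p d2 - cbar k g p d2) <= / (k - 1) / ln 2.
Proof.
intros Hk Hg Hp Hd; pose proof ln_lt_2.
pose proof (gbar_div_ge0 k g p d2 ltac:(lra) Hg Hp Hd) as Hc.
rewrite Ec_sub_cbar by lra.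
pose proof (jensen_gap_ge0 _ k Hc ltac:(lra)); pose proof (jensen_gap_le_inv _ k Hc Hk).
rewrite Rabs_pos_eq by (apply Rdiv_le_0_compat; lra).
apply Rmult_le_compat_r; [left; apply Rinv_0_lt_compat|]; lra.
Qed.

Lemma Ec_sub_cbar_le_Rpower (k g p d2 s : R) : 0 < g -> 0 < p -> 0 < d2 ->
  0 < s <= 1 -> s < k ->
  Rabs (Ec k g p d2 - cbar k g p d2) <=
  (1 + / s) * Gamma_fun (k + - s) / Gamma_fun k / ln 2 * Rpower (gbar g p d2 / k) (- s).
Proof.
intros Hg Hp Hd Hs Hsk; pose proof ln_lt_2.
assert (Hc : 0 < gbar g p d2 / k)
  by (unfold gbar; apply Rdiv_lt_0_compat; [apply Rdiv_lt_0_compat; nra | lra]).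
rewrite Ec_sub_cbar by lra.
pose proof (jensen_gap_ge0 _ k (Rlt_le _ _ Hc) ltac:(lra)).
pose proof (jensen_gap_le_Rpower _ k s Hc Hs Hsk).
rewrite Rabs_pos_eq by (apply Rdiv_le_0_compat; lra).
replace ((1 + / s) * Gamma_fun (k + - s) / Gamma_fun k / ln 2 * Rpower (gbar g p d2 / k) (- s))
  with ((1 + / s) * Gamma_fun (k + - s) / Gamma_fun k * Rpower (gbar g p d2 / k) (- s) / ln 2)
  by (pose proof (Gamma_fun_pos k ltac:(lra)); field; lra).
apply Rmult_le_compat_r; [left; apply Rinv_0_lt_compat|]; lra.
Qed.

Lemma Ec_sub_cbar_vanishes_gbar (k : R) : 0 < k ->
  forall eps, 0 < eps -> exists M, forall g p d2, 0 < g -> 0 <= p -> 0 < d2 ->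
  M < gbar g p d2 -> Rabs (Ec k g p d2 - cbar k g p d2) < eps.
Proof.
intros Hk eps He; set (s := Rmin 1 (k / 2)).
assert (Hs : 0 < s <= 1 /\ s < k).
{ unfold s; pose proof (Rmin_pos 1 (k / 2)); pose proof (Rmin_l 1 (k / 2));
  pose proof (Rmin_r 1 (k / 2)); lra. }
set (C := (1 + / s) * Gamma_fun (k + - s) / Gamma_fun k / ln 2).
assert (HC : 0 < C).
{ pose proof (Gamma_fun_pos k Hk); pose proof (Gamma_fun_pos (k + - s) ltac:(lra)).
  pose proof (Rinv_0_lt_compat s (proj1 (proj1 Hs))); pose proof ln_lt_2.
  unfold C; repeat apply Rdiv_lt_0_compat; try apply Rmult_lt_0_compat; lra. }
exists (k * Rpower (eps / C) (- / s)); intros g p d2 Hg Hp Hd HM.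
assert (HM0 : 0 < k * Rpower (eps / C) (- / s))
  by (apply Rmult_lt_0_compat; [lra | apply Rpower_pos]).
assert (Hp' : 0 < p).
{ destruct Hp as [Hp | <-]; [exact Hp|].
  unfold gbar in HM; rewrite Rmult_0_l, Rdiv_0_l in HM; lra. }
assert (Hc : Rpower (eps / C) (- / s) < gbar g p d2 / k).
{ apply Rmult_lt_reg_l with k; [lra|]; replace (k * (gbar g p d2 / k)) with (gbar g p d2)
    by (field; lra); exact HM. }
pose proof (Rpower_neg_lt_of_gt_root s (eps / C) _ (proj1 (proj1 Hs))
  (Rdiv_lt_0_compat _ _ He HC) Hc).
eapply Rle_lt_trans; [apply (Ec_sub_cbar_le_Rpower k g p d2 s); tauto|]; fold C.
replace eps with (C * (eps / C)) by (field; lra); apply Rmult_lt_compat_l; lra.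
Qed.

Lemma Ec_sub_cbar_vanishes_shape (g p d2 : R) : 0 < g -> 0 <= p -> 0 < d2 ->
  is_lim (fun k => Ec k g p d2 - cbar k g p d2) p_infty 0.
Proof.
intros Hg Hp Hd; apply is_lim_spec; intros eps; pose proof ln_lt_2.
assert (Heps : 0 < eps * ln 2) by (apply Rmult_lt_0_compat; [apply cond_pos | lra]).
exists (1 + / (eps * ln 2)); intros k Hk; pose proof (Rinv_0_lt_compat _ Heps).
rewrite Rminus_0_r; eapply Rle_lt_trans; [apply Ec_sub_cbar_le_inv; lra|].
assert (/ (k - 1) < eps * ln 2)
  by (rewrite <- (Rinv_inv (eps * ln 2)); apply Rinv_lt_contravar; nra).
apply Rmult_lt_reg_r with (ln 2); [lra|].
unfold Rdiv; rewrite Rmult_assoc, Rinv_l; lra.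
Qed.

Theorem lemma1 (kappa g p d2 : R) (hk : 0 < kappa) (hg : 0 < g) (hp : 0 <= p)
  (hd : 0 < d2) :
  (* the lower bound *)
  cbar kappa g p d2 <= Ec kappa g p d2 /\
  (* tightness as gbar -> oo (kappa fixed) *)
  (forall eps : R, 0 < eps -> exists M : R, forall g' p' d2' : R,
     0 < g' -> 0 <= p' -> 0 < d2' -> M < gbar g' p' d2' ->
     Rabs (Ec kappa g' p' d2' - cbar kappa g' p' d2') < eps) /\
  (* tightness as kappa -> oo (g, p, d2 fixed) *)
  is_lim (fun k => Ec k g p d2 - cbar k g p d2) p_infty 0.
Proof.
split; [|split].
- exact (cbar_le_Ec kappa g p d2 hk hg hp hd).
- exact (Ec_sub_cbar_vanishes_gbar kappa hk).
- exact (Ec_sub_cbar_vanishes_shape g p d2 hg hp hd).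
Qed.
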